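(* The class of halfspaces over $\mathbb{R}^2$ has a lossless compression scheme of size $5$ with respect to the comparison oracle (together with label queries), with the trivial inference rule.
   Context: A halfspace over $\mathbb{R}^2$ is $x\mapsto\mathrm{sign}(h(x))$ with $h(x)=\langle v,x\rangle+b$, $v\in S^1$, $b\in\mathbb{R}$ (label $1$ iff $h(x)\ge0$). A label query on $x$ returns its label; a comparison query on $x,x'$ returns whether $\langle x,v\rangle\ge\langle x',v\rangle$ (equivalently $h(x)\ge h(x')$). For $S\subseteq\mathbb{R}^2$, $Q_h(S)$ is the set of all combinations of valid responses to label and comparison queries on $S$, and $q(S)|_W$ its restriction to $W\subseteq S$. The label of $x$ is inferred by $q(S)$ if all halfspaces consistent with $q(S)$ give $x$ the same label; $I(q(S))$ is the set of such points. A lossless compression scheme of size $k$: for every halfspace $h$, every $S$ on which $h$'s label is constant, and every $q(S)\in Q_h(S)$, there is $W\subseteq S$ with $|W|\le k$ and $I(q(S))=I(q(S)|_W)$. *)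

From HB Require Import structures.
From mathcomp Require Import all_boot all_order all_algebra.
From mathcomp Require Import reals.
Set Implicit Arguments. Unset Strict Implicit. Unset Printing Implicit Defensive.
Import Order.TTheory GRing.Theory Num.Theory.
Local Open Scope ring_scope.

Section Halfspaces.
Variable R : realType.

Definition point := (R * R)%type.

Definition dot (u x : point) : R := u.1 * x.1 + u.2 * x.2.

Definition on_circle (v : point) : Prop := v.1 ^+ 2 + v.2 ^+ 2 = 1.

Definition hval (v : point) (b : R) (x : point) : R := dot v x + b.

Definition hlabel (v : point) (b : R) (x : point) : bool := 0 <= hval v b x.

Definition hcmp (v : point) (x x' : point) : bool := dot x' v <= dot x v.

Record responses := Responses {
  rlab : point -> bool;
  rcmp : point -> point -> bool }.

Definition valid_responses (v : point) (b : R) (S : seq point) (q : responses) : Prop :=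
  (forall x, x \in S -> rlab q x = hlabel v b x) /\
  (forall x x', x \in S -> x' \in S -> rcmp q x x' = hcmp v x x').

Definition consistent (q : responses) (W : seq point) (v' : point) (b' : R) : Prop :=
  on_circle v' /\
  (forall x, x \in W -> hlabel v' b' x = rlab q x) /\
  (forall x x', x \in W -> x' \in W -> hcmp v' x x' = rcmp q x x').

Definition inferred (q : responses) (W : seq point) (y : point) : Prop :=
  forall v1 b1 v2 b2, consistent q W v1 b1 -> consistent q W v2 b2 ->
    hlabel v1 b1 y = hlabel v2 b2 y.

Definition lossless_compression_scheme (k : nat) : Prop :=
  forall (v : point) (b : R), on_circle v ->
  forall S : seq point,
    (forall x y, x \in S -> y \in S -> hlabel v b x = hlabel v b y) ->
  forall q : responses, valid_responses v b S q ->
  exists W : seq point,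
    {subset W <= S} /\ (size W <= k)%N /\
    (forall y, inferred q S y <-> inferred q W y).

End Halfspaces.

From mathcomp Require Import all_boot all_order all_algebra reals ring lra.
From Stdlib Require Import Classical.
Set Implicit Arguments. Unset Strict Implicit. Unset Printing Implicit Defensive.
Import Order.TTheory GRing.Theory Num.Theory.
Local Open Scope ring_scope.

(* Take for W a point x0 of S that is extreme for v on the side of its label,
   together with at most four points of S whose comparisons pin down the order
   induced by v on all of S.  A halfspace consistent with q(S)|_W then orders S
   like v and labels x0 like h; labels are monotone along that order, so it
   labels all of S like h and is consistent with q(S).
   In the plane write v' = alpha v + beta v^perp, with alpha = <v',v> and
   beta = cross v v'.  A tie a != b for v that persists for v' forces beta = 0,
   after which one strict pair forces alpha > 0.  Without ties, for
   <c,v> < <e,v> the sign of <e - c, v'> is that of alpha + beta s(c,e), affine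
   in the slope s(c,e), so the pairs of minimal and maximal slope control all
   the others. *)

Lemma seq_argmin (T : eqType) (R : realDomainType) (s : seq T) (g : T -> R) :
  s != [::] -> exists2 x, x \in s & {in s, forall y, g x <= g y}.
Proof.
elim: s => [//|a s IH] _.
have [->|/IH[x xs gx]] := eqVneq s [::].
  by exists a; rewrite ?mem_head // => y; rewrite inE => /eqP ->.
have [gax|gxa] := leP (g a) (g x).
  exists a; first exact: mem_head.
  by move=> y; rewrite inE => /predU1P[->//|/gx]; apply: le_trans.
exists x; first by rewrite inE xs orbT.
by move=> y; rewrite inE => /predU1P[->|/gx//]; apply: ltW.
Qed.

Section PlanarOrder.
Variable R : realType.
Implicit Types (u v w x y a b c e : point R) (S W : seq (point R)).

Definition cross u w := u.1 * w.2 - u.2 * w.1.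

Lemma dotC u w : dot u w = dot w u.
Proof. by rewrite /dot mulrC [u.2 * _]mulrC. Qed.

Lemma dot_decomp v v' w : on_circle v ->
  dot w v' = dot v' v * dot w v + cross v v' * cross v w.
Proof. by rewrite /on_circle /dot /cross => hv; rewrite -[LHS]mul1r -hv; ring. Qed.

Lemma dot_parallel v v' w : on_circle v -> cross v v' = 0 ->
  dot w v' = dot v' v * dot w v.
Proof. by move=> hv vv'; rewrite (dot_decomp _ _ hv) vv' mul0r addr0. Qed.

Lemma cross_eq0_of_tie v v' a b :
  a != b -> dot a v = dot b v -> dot a v' = dot b v' -> cross v v' = 0.
Proof.
move=> ab tie tie'; apply/eqP; apply: contraNT ab => nz.
have dx : (b.1 - a.1) * cross v v'
    = v'.2 * (dot b v - dot a v) - v.2 * (dot b v' - dot a v').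
  by rewrite /cross /dot; ring.
have dy : (b.2 - a.2) * cross v v'
    = v.1 * (dot b v' - dot a v') - v'.1 * (dot b v - dot a v).
  by rewrite /cross /dot; ring.
rewrite tie tie' !subrr !mulr0 subrr in dx dy.
move/eqP: dx; rewrite mulf_eq0 (negbTE nz) orbF subr_eq0 => /eqP dx.
move/eqP: dy; rewrite mulf_eq0 (negbTE nz) orbF subr_eq0 => /eqP dy.
by case: a b dx dy {tie tie'} => [a1 a2] [b1 b2] /= -> ->.
Qed.

Definition slope v (p : point R * point R) :=
  (cross v p.2 - cross v p.1) / (dot p.2 v - dot p.1 v).

Lemma lt_dot_slope v v' c e : on_circle v -> dot c v < dot e v ->
  (dot c v' < dot e v') = (0 < dot v' v + cross v v' * slope v (c, e)).
Proof.
move=> hv ce.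
have gap_gt0 : 0 < dot e v - dot c v by rewrite subr_gt0.
have gap' : dot e v' - dot c v'
    = (dot e v - dot c v) * (dot v' v + cross v v' * slope v (c, e)).
  rewrite (dot_decomp _ e hv) (dot_decomp _ c hv) /slope /=.
  by field; rewrite gt_eqF.
by rewrite -subr_gt0 gap' pmulr_rgt0.
Qed.

Definition same_order v v' S := {in S &, forall x y, hcmp v' x y = hcmp v x y}.

Lemma same_order_tie v v' S x y : same_order v v' S -> x \in S -> y \in S ->
  dot x v = dot y v -> dot x v' = dot y v'.
Proof.
move=> o xS yS tie; apply/le_anti.
by have := o y x yS xS; have := o x y xS yS; rewrite /hcmp tie lexx => -> ->.
Qed.

Lemma same_order_lt v v' S x y : same_order v v' S -> x \in S -> y \in S ->
  dot x v < dot y v -> dot x v' < dot y v'.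
Proof. by move=> o xS yS; have := o x y xS yS; rewrite /hcmp !ltNge => ->. Qed.

Lemma same_order_of_tie_gap v v' S a b c e : on_circle v ->
  a != b -> dot a v = dot b v -> dot a v' = dot b v' ->
  dot c v < dot e v -> dot c v' < dot e v' -> same_order v v' S.
Proof.
move=> hv ab tie tie' ce ce' x y _ _.
have par w := dot_parallel w hv (cross_eq0_of_tie ab tie tie').
have pos : 0 < dot v' v by rewrite !par in ce'; nra.
by rewrite /hcmp !par ler_pM2l.
Qed.

Lemma same_order_of_tie v v' S a b : on_circle v ->
  a != b -> dot a v = dot b v -> dot a v' = dot b v' ->
  {in S &, forall x y, dot x v = dot y v} -> same_order v v' S.
Proof.
move=> hv ab tie tie' flat x y xS yS.
have par w := dot_parallel w hv (cross_eq0_of_tie ab tie tie').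
by rewrite /hcmp !par (flat x y) ?lexx.
Qed.

Definition rising_pairs v S :=
  [seq p <- [seq (x, y) | x <- S, y <- S] | dot p.1 v < dot p.2 v].

Lemma mem_rising_pairs v S x y :
  ((x, y) \in rising_pairs v S) = [&& x \in S, y \in S & dot x v < dot y v].
Proof.
rewrite mem_filter /= andbC; case: (dot x v < dot y v); rewrite ?andbF //=.
rewrite !andbT.
apply/allpairsP/andP => [[[x' y'] [/= xS yS [-> ->]]] // | [xS yS]].
by exists (x, y).
Qed.

Lemma same_order_of_slopes v v' S p1 p2 : on_circle v ->
  {in S &, injective (fun x => dot x v)} ->
  p1 \in rising_pairs v S -> p2 \in rising_pairs v S ->
  {in rising_pairs v S, forall p, slope v p1 <= slope v p <= slope v p2} ->
  dot p1.1 v' < dot p1.2 v' -> dot p2.1 v' < dot p2.2 v' -> same_order v v' S.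
Proof.
case: p1 p2 => [c1 e1] [c2 e2] hv inj.
rewrite !mem_rising_pairs => /and3P[_ _ ce1] /and3P[_ _ ce2] between /= ce1' ce2'.
have rising : {in S &, forall c e, dot c v < dot e v -> dot c v' < dot e v'}.
  move=> c e cS eS ce; rewrite (lt_dot_slope v' hv ce).
  have /andP[lo hi] : slope v (c1, e1) <= slope v (c, e) <= slope v (c2, e2).
    by apply: between; rewrite mem_rising_pairs cS eS.
  rewrite (lt_dot_slope v' hv ce1) in ce1'; rewrite (lt_dot_slope v' hv ce2) in ce2'.
  have [cr_ge0|cr_lt0] := leP 0 (cross v v').
  - by have := ler_wpM2l cr_ge0 lo; lra.
  - by have := ler_wnM2l (ltW cr_lt0) hi; lra.
move=> x y xS yS; rewrite /hcmp.
case: (ltgtP (dot y v) (dot x v)) => [yx|xy|tie].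
- by rewrite ltW // rising.
- by rewrite leNgt rising.
- by rewrite (inj y x) ?lexx.
Qed.

Definition order_witness v S W :=
  [/\ {subset W <= S}, (size W <= 4)%N
    & forall v', same_order v v' W -> same_order v v' S].

Lemma order_witness_of_tie v S a b : on_circle v ->
  a \in S -> b \in S -> a != b -> dot a v = dot b v -> exists W, order_witness v S W.
Proof.
move=> hv aS bS ab tie.
have [[c [e [cS [eS ce]]]] | nogap] :=
  classic (exists c e, [/\ c \in S, e \in S & dot c v < dot e v]).
  pose W := [:: a; b; c; e].
  have [aW bW cW eW] : [/\ a \in W, b \in W, c \in W & e \in W].
    by rewrite !inE !eqxx !orbT.
  exists W; split=> // [|v' o]; first by apply/allP; rewrite /= aS bS cS eS.
  exact: (same_order_of_tie_gap hv ab tie (same_order_tie o aW bW tie) ce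
            (same_order_lt o cW eW ce)).
have flat : {in S &, forall x y, dot x v = dot y v}.
  move=> x y xS yS; apply/le_anti/andP; split; rewrite leNgt.
  - by apply/negP => yx; apply: nogap; exists y, x.
  - by apply/negP => xy; apply: nogap; exists x, y.
exists [:: a; b]; split=> // [|v' o]; first by apply/allP; rewrite /= aS bS.
apply: (same_order_of_tie hv ab tie _ flat).
by apply: same_order_tie o _ _ tie; rewrite !inE eqxx ?orbT.
Qed.

Lemma order_witness_of_injective v S : on_circle v ->
  {in S &, injective (fun x => dot x v)} -> exists W, order_witness v S W.
Proof.
move=> hv inj.
have [P0|P_ne] := eqVneq (rising_pairs v S) [::].
  exists [::]; split=> // v' _ x y xS yS.
  have [yx|xy|/(inj y x yS xS) ->] := ltgtP (dot y v) (dot x v).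
  - by have := mem_rising_pairs v S y x; rewrite P0 xS yS yx.
  - by have := mem_rising_pairs v S x y; rewrite P0 xS yS xy.
  - by rewrite /hcmp !lexx.
have [[c1 e1] p1P min1] := seq_argmin (slope v) P_ne.
have [[c2 e2] p2P max2] := seq_argmin (fun p => - slope v p) P_ne.
move: (p1P) (p2P); rewrite !mem_rising_pairs.
move=> /and3P[c1S e1S ce1] /and3P[c2S e2S ce2].
pose W := [:: c1; e1; c2; e2].
have [c1W e1W c2W e2W] : [/\ c1 \in W, e1 \in W, c2 \in W & e2 \in W].
  by rewrite !inE !eqxx !orbT.
exists W; split=> // [|v' o]; first by apply/allP; rewrite /= c1S e1S c2S e2S.
apply: (same_order_of_slopes hv inj p1P p2P).
- by move=> p pP; rewrite min1 //= -lerN2 max2.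
- exact: same_order_lt o c1W e1W ce1.
- exact: same_order_lt o c2W e2W ce2.
Qed.

Lemma exists_order_witness v S : on_circle v -> exists W, order_witness v S W.
Proof.
move=> hv.
have [[a [b [aS [bS [ab tie]]]]] | notie] :=
  classic (exists a b, [/\ a \in S, b \in S, a != b & dot a v = dot b v]).
  exact: (order_witness_of_tie hv aS bS ab tie).
apply: order_witness_of_injective => // x y xS yS tie.
by apply: NNPP => /eqP xy; apply: notie; exists x, y.
Qed.

End PlanarOrder.

Lemma same_order_subset (R : realType) (v v' : point R) (W W' : seq (point R)) :
  {subset W <= W'} -> same_order v v' W' -> same_order v v' W.
Proof. by move=> WW' o x y xW yW; apply: o; apply: WW'. Qed.

Lemma hlabel_le (R : realType) (v : point R) b x y :
  hcmp v y x -> hlabel v b x -> hlabel v b y.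
Proof.
by rewrite /hcmp /hlabel /hval !(dotC v) => xy /le_trans; apply; rewrite lerD2r.
Qed.

Lemma consistent_subset (R : realType) (q : responses R) W W' v' b' :
  {subset W <= W'} -> consistent q W' v' b' -> consistent q W v' b'.
Proof.
move=> WW' [hv' [lab cmp]]; split=> //.
by split=> [x xW | x y xW yW]; [apply: lab | apply: cmp]; apply: WW'.
Qed.

Lemma inferred_ext (R : realType) (q : responses R) W W' :
  (forall v' b', consistent q W v' b' <-> consistent q W' v' b') ->
  forall y, inferred q W y <-> inferred q W' y.
Proof. by move=> eqW y; split=> inf v1 b1 v2 b2 /eqW c1 /eqW c2; apply: inf. Qed.

Section Compression.
Variables (R : realType) (v : point R) (b : R) (S : seq (point R)) (q : responses R).
Hypotheses (q_valid : valid_responses v b S q)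
           (S_const : {in S &, forall x y, hlabel v b x = hlabel v b y}).

Definition label_extreme x0 :=
  {in S, forall x, if hlabel v b x0 then hcmp v x x0 else hcmp v x0 x}.

Lemma exists_label_extreme : S != [::] -> exists2 x0, x0 \in S & label_extreme x0.
Proof.
pose g x := if hlabel v b x then dot x v else - dot x v.
move=> /(seq_argmin g)[x0 x0S min].
exists x0 => // x xS; have := min x xS; rewrite /g (S_const xS x0S) /hcmp.
by case: hlabel; rewrite ?lerN2.
Qed.

Lemma same_order_of_consistent W v' b' :
  {subset W <= S} -> consistent q W v' b' -> same_order v v' W.
Proof. by move=> WS [_ [_ cmp]] x y xW yW; rewrite cmp // q_valid.2 ?WS. Qed.

Lemma consistent_of_witness W x0 v' b' :
  {subset W <= S} -> x0 \in W -> label_extreme x0 ->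
  (same_order v v' W -> same_order v v' S) ->
  consistent q W v' b' -> consistent q S v' b'.
Proof.
move=> WS x0W ext Wwit c; have [hv' [lab _]] := c.
have oS := Wwit (same_order_of_consistent WS c).
have x0S := WS x0 x0W.
split=> //; split=> [x xS | x y xS yS]; last by rewrite oS // q_valid.2.
have lab_x0 : hlabel v b x0 = hlabel v' b' x0 by rewrite lab // q_valid.1.
rewrite q_valid.1 // (S_const xS x0S) lab_x0.
have := ext x xS; rewrite lab_x0 -!oS //.
case l0 : (hlabel v' b' x0) => le; first exact: hlabel_le le l0.
by apply/negbTE/negP => /(hlabel_le le); rewrite l0.
Qed.

End Compression.

Theorem proposition4p6 (R : realType) : lossless_compression_scheme R 5.
Proof.
move=> v b hv S S_const q q_valid.
have [->|S_ne] := eqVneq S [::]; first by exists [::].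
have [x0 x0S ext] := exists_label_extreme S_const S_ne.
have [W [WS W_size W_wit]] := exists_order_witness S hv.
have x0WS : {subset x0 :: W <= S} by move=> z; rewrite inE => /predU1P[->|/WS].
exists (x0 :: W); do 2 split => //.
apply: inferred_ext => v' b'; split; first exact: consistent_subset.
apply: (consistent_of_witness q_valid S_const x0WS (mem_head _ _) ext) => o.
by apply/W_wit/(same_order_subset _ o) => z zW; rewrite inE zW orbT.
Qed.
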